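(* Let $\theta\in\mathbb{R}$ be constant and let $Y(t)=\Delta(t)\theta+\xi(t)$ with scalar measurable signals $Y,\Delta$ and $\xi(t)=a\sin(\omega t+\psi)$, $a,\omega>0$, $\psi\in\mathbb{R}$ unknown. Fix $\lambda>0$ and let $(\cdot)_F:=\frac{\lambda^2}{(\mathcal P+\lambda)^2}(\cdot)$ ($\mathcal P=d/dt$), so that $Y_F=\Delta_F\theta+\xi_F$, and set $\varphi(t):=\mathrm{col}(\ddot\Delta_F(t),-\ddot Y_F(t))$, $\mu:=\mathrm{col}(\theta/\omega^2,1/\omega^2)$, $e_2:=\mathrm{col}(0,1)$, $\mathcal A_\xi(t):=\begin{pmatrix}0&\Delta_F(t)\\-\Delta_F(t)&-1\end{pmatrix}$, $b_\xi(t):=\mathrm{col}(-\Delta_F(t)z(t),0)$. Define $\dot z=-z-Y_F$, $z(0)=0$; $\dot r=\mathcal A_\xi r+b_\xi$, $r(0)=0\in\mathbb{R}^2$; $\dot\Omega=\mathcal A_\xi\Omega-e_2\varphi^\top$, $\Omega(0)=0_{2\times2}$; $\dot\Phi_\xi=\mathcal A_\xi\Phi_\xi$, $\Phi_\xi(0)=I_2$. Then for all $t\ge0$, $z(t)-r_2(t)=(\Phi_\xi)_{2,1}(t)\theta+\Omega_{2,1}(t)\mu_1+\Omega_{2,2}(t)\mu_2$.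
   Context: Convention: effects of filter initial conditions (exponentially decaying transients) are neglected, so the filtered sinusoid satisfies exactly $\ddot\xi_F=-\omega^2\xi_F$. *)

From HB Require Import structures.
From mathcomp Require Import all_boot all_order all_algebra.
From mathcomp Require Import all_classical all_reals all_analysis.
Set Implicit Arguments. Unset Strict Implicit. Unset Printing Implicit Defensive.
Import Order.TTheory GRing.Theory Num.Theory.
Import numFieldNormedType.Exports.
Local Open Scope classical_set_scope.
Local Open Scope ring_scope.

Definition dot {R : realType} (f : R -> R) : R -> R := derive1 f.
Definition ddot {R : realType} (f : R -> R) : R -> R := derive1 (derive1 f).

Definition twice_diff {R : realType} (f : R -> R) (t : R) : Prop :=
  (\forall s \near t, derivable f s 1) /\ derivable (derive1 f) t 1.

(* uF = lam^2/(P+lam)^2 u, i.e. uF'' + 2 lam uF' + lam^2 uF = lam^2 u, for t >= 0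
   (initial conditions of the filter are neglected: no constraint at t = 0). *)
Definition filtered {R : realType} (lam : R) (u uF : R -> R) : Prop :=
  forall t : R, 0 <= t -> twice_diff uF t /\
    ddot uF t + 2 * lam * dot uF t + lam ^+ 2 * uF t = lam ^+ 2 * u t.

From HB Require Import structures.
From mathcomp Require Import all_boot all_order all_algebra.
From mathcomp Require Import all_classical all_reals all_analysis.
From mathcomp Require Import ring lra.
Import Order.TTheory GRing.Theory Num.Theory.
Import numFieldNormedType.Exports.
Local Open Scope classical_set_scope.
Local Open Scope ring_scope.

(* Put v := (theta - r_1, z - r_2) - (Phi_xi (theta, 0) + Omega mu).  Since
   xi_F'' = - omega^2 xi_F, the filtered output satisfies the regression
   Y_F = Delta_F theta + phi^T mu, which cancels every forcing term, so v solves
   v' = A_xi v with v(0) = 0.  A_xi is skew-symmetric up to the damping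
   - e_2 e_2^T, hence |v|^2 is nonincreasing and v vanishes for t >= 0. *)

Section DampedSkewSystem.
Context {R : realType}.
Variables (k d v1 v2 : R -> R).
Hypotheses (v10 : v1 0 = 0) (v20 : v2 0 = 0).
Hypotheses (dv1 : forall s : R, 0 <= s -> derivable v1 s 1)
           (dv2 : forall s : R, 0 <= s -> derivable v2 s 1).
(* Only s > 0 is required: in the application the second equation rests on
   the filter relations, which hold on a neighbourhood of s only when s > 0. *)
Hypothesis v1_ode : forall s : R, 0 < s -> is_derive s 1 v1 (k s * v2 s).
Hypothesis v2_ode :
  forall s : R, 0 < s -> is_derive s 1 v2 (- k s * v1 s - d s * v2 s).
Hypothesis d_ge0 : forall s : R, 0 < s -> 0 <= d s.

Let energy : R -> R := v1 ^+ 2 + v2 ^+ 2.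

Lemma is_derive_energy (s : R) :
  0 < s -> is_derive s 1 energy (- (2 * d s * v2 s ^+ 2)).
Proof.
move=> s0.
apply: is_derive_eq (is_deriveD (is_deriveX 2 (v1_ode s s0))
                                (is_deriveX 2 (v2_ode s s0))) _.
by rewrite expr1 /GRing.scale /=; ring.
Qed.

Lemma energy_le0 (t : R) : 0 <= t -> energy t <= 0.
Proof.
move=> t0.
have energy0 : energy 0 = 0 by rewrite /energy !fctE v10 v20 expr0n addr0.
rewrite -energy0; apply: (@ler0_derive1_le_cc _ energy 0 t); last 3 first.
- by rewrite in_itv /= lexx t0.
- by rewrite in_itv /= lexx t0.
- exact: t0.
- move=> s /[!in_itv]/= /andP[s0 _].
  by have [] := is_derive_energy s s0.
- move=> s /[!in_itv]/= /andP[s0 _].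
  rewrite derive1E; have [_ ->] := is_derive_energy s s0; rewrite oppr_le0.
  by rewrite mulr_ge0 ?sqr_ge0 // mulr_ge0 ?d_ge0.
- apply: derivable_within_continuous => s /[!in_itv]/= /andP[s0 _].
  by apply: derivableD; apply: derivableX; [apply: dv1 | apply: dv2].
Qed.

Lemma damped_skew_system_eq0 (t : R) : 0 <= t -> v1 t = 0 /\ v2 t = 0.
Proof.
move=> /energy_le0; rewrite /energy !fctE => Et.
have h1 := sqr_ge0 (v1 t); have h2 := sqr_ge0 (v2 t).
by split; apply/eqP; rewrite -sqrf_eq0 eq_le sqr_ge0 andbT; lra.
Qed.

End DampedSkewSystem.

Section NearLinearCombination.
Context {R : realType}.
Implicit Types (f g h : R -> R) (c t : R).

Lemma derive1_near_lincomb {f g h c t} :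
  (\forall s \near t, h s = f s * c + g s) ->
  derivable f t 1 -> derivable g t 1 ->
  derive1 h t = derive1 f t * c + derive1 g t.
Proof.
move=> fgh df dg; rewrite !derive1E.
have hE : \near t, (fun s => f s * c + g s) t = h t.
  by move: fgh; apply: filterS => s ->.
rewrite -(near_eq_derive _ hE); apply: derive_val.
apply: is_derive_eq (is_deriveD (is_deriveM (derivableP df) (is_derive_cst c t 1))
                               (derivableP dg)) _.
by rewrite /GRing.scale /=; ring.
Qed.

Lemma ddot_near_lincomb {f g h c t} :
  (\forall s \near t, h s = f s * c + g s) ->
  twice_diff f t -> twice_diff g t ->
  ddot h t = ddot f t * c + ddot g t.
Proof.
move=> fgh [df d2f] [dg d2g]; apply: derive1_near_lincomb d2f d2g.
by apply: filterS3 (nbhs_interior fgh) df dg => s; exact: derive1_near_lincomb.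
Qed.

Lemma filtered_sinusoid_regression {theta omega : R} {YF DF xiF : R -> R} {t} :
  omega != 0 -> (\forall s \near t, YF s = DF s * theta + xiF s) ->
  twice_diff DF t -> twice_diff xiF t -> ddot xiF t = - omega ^+ 2 * xiF t ->
  YF t = DF t * theta + ddot DF t * (theta / omega ^+ 2)
         - ddot YF t * (1 / omega ^+ 2).
Proof.
move=> omega_neq0 YF_lin dDF dxiF xiF_osc.
rewrite (ddot_near_lincomb YF_lin dDF dxiF) xiF_osc (nbhs_singleton YF_lin).
by field.
Qed.

End NearLinearCombination.

Theorem proposition5 (R : realType)
  (theta a omega psi lam : R)
  (Y Delta xi YF DeltaF xiF : R -> R)
  (z r1 r2 Om11 Om12 Om21 Om22 Ph11 Ph12 Ph21 Ph22 : R -> R) :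
  0 < a -> 0 < omega -> 0 < lam ->
  measurable_fun [set: R] Y -> measurable_fun [set: R] Delta ->
  (forall t : R, xi t = a * sin (omega * t + psi)) ->
  (forall t : R, Y t = Delta t * theta + xi t) ->
  (* filtered signals *)
  filtered lam Y YF -> filtered lam Delta DeltaF -> filtered lam xi xiF ->
  (* transients of the filters neglected (convention) *)
  (forall t : R, 0 <= t -> YF t = DeltaF t * theta + xiF t) ->
  (forall t : R, 0 <= t -> ddot xiF t = - omega ^+ 2 * xiF t) ->
  (* z' = -z - YF, z(0) = 0 *)
  z 0 = 0 ->
  (forall t : R, 0 <= t -> is_derive t 1 z (- z t - YF t)) ->
  (* r' = A_xi r + b_xi, r(0) = 0, A_xi = [[0, DF], [-DF, -1]], b_xi = (-DF z, 0) *)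
  r1 0 = 0 -> r2 0 = 0 ->
  (forall t : R, 0 <= t -> is_derive t 1 r1 (DeltaF t * r2 t - DeltaF t * z t)) ->
  (forall t : R, 0 <= t -> is_derive t 1 r2 (- DeltaF t * r1 t - r2 t)) ->
  (* Omega' = A_xi Omega - e2 phi^T, Omega(0) = 0, phi = (ddot DF, - ddot YF) *)
  Om11 0 = 0 -> Om12 0 = 0 -> Om21 0 = 0 -> Om22 0 = 0 ->
  (forall t : R, 0 <= t -> is_derive t 1 Om11 (DeltaF t * Om21 t)) ->
  (forall t : R, 0 <= t -> is_derive t 1 Om12 (DeltaF t * Om22 t)) ->
  (forall t : R, 0 <= t ->
     is_derive t 1 Om21 (- DeltaF t * Om11 t - Om21 t - ddot DeltaF t)) ->
  (forall t : R, 0 <= t ->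
     is_derive t 1 Om22 (- DeltaF t * Om12 t - Om22 t - (- ddot YF t))) ->
  (* Phi_xi' = A_xi Phi_xi, Phi_xi(0) = I_2 *)
  Ph11 0 = 1 -> Ph12 0 = 0 -> Ph21 0 = 0 -> Ph22 0 = 1 ->
  (forall t : R, 0 <= t -> is_derive t 1 Ph11 (DeltaF t * Ph21 t)) ->
  (forall t : R, 0 <= t -> is_derive t 1 Ph12 (DeltaF t * Ph22 t)) ->
  (forall t : R, 0 <= t -> is_derive t 1 Ph21 (- DeltaF t * Ph11 t - Ph21 t)) ->
  (forall t : R, 0 <= t -> is_derive t 1 Ph22 (- DeltaF t * Ph12 t - Ph22 t)) ->
  (* conclusion, with mu = (theta / omega^2, 1 / omega^2) *)
  forall t : R, 0 <= t ->
    z t - r2 t = Ph21 t * theta + Om21 t * (theta / omega ^+ 2)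
                 + Om22 t * (1 / omega ^+ 2).
Proof.
move=> _ omega0 _ _ _ _ _ _ fD fX YF_lin xiF_osc z0 z_ode r10 r20 r1_ode r2_ode
  O110 O120 O210 O220 O11_ode O12_ode O21_ode O22_ode
  P110 _ P210 _ P11_ode _ P21_ode _ t t0.
pose c1 := theta / omega ^+ 2; pose c2 := 1 / omega ^+ 2.
pose v1 (s : R) := theta - r1 s - theta * Ph11 s - c1 * Om11 s - c2 * Om12 s.
pose v2 (s : R) := z s - r2 s - theta * Ph21 s - c1 * Om21 s - c2 * Om22 s.
have v1_der (s : R) : 0 <= s -> is_derive s 1 v1 (DeltaF s * v2 s).
  move=> s0; apply: is_derive_eq
    (is_deriveB (is_deriveB (is_deriveB (is_deriveB (is_derive_cst theta s 1)
      (r1_ode s s0)) (is_deriveZ theta (P11_ode s s0)))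
      (is_deriveZ c1 (O11_ode s s0))) (is_deriveZ c2 (O12_ode s s0))) _.
  by rewrite /v2 /GRing.scale /=; ring.
have v2_der (s : R) (s0 : 0 <= s) :=
  is_deriveB (is_deriveB (is_deriveB (is_deriveB (z_ode s s0) (r2_ode s s0))
    (is_deriveZ theta (P21_ode s s0))) (is_deriveZ c1 (O21_ode s s0)))
    (is_deriveZ c2 (O22_ode s s0)).
have v2_ode (s : R) : 0 < s -> is_derive s 1 v2 (- DeltaF s * v1 s - 1 * v2 s).
  move=> s0; apply: is_derive_eq (v2_der s (ltW s0)) _.
  have [[dDF _] [dxiF _]] := (fD s (ltW s0), fX s (ltW s0)).
  have YF_near : \forall u \near s, YF u = DeltaF u * theta + xiF u.
    by apply: filterS (lt_nbhsr s0) => u /ltW /YF_lin.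
  rewrite (filtered_sinusoid_regression (lt0r_neq0 omega0) YF_near dDF dxiF).
    by rewrite /v1 /v2 /c1 /c2 /GRing.scale /=; ring.
  exact/xiF_osc/ltW.
have v10 : v1 0 = 0 by rewrite /v1 r10 P110 O110 O120; ring.
have v20 : v2 0 = 0 by rewrite /v2 z0 r20 P210 O210 O220; ring.
have dv1 (s : R) : 0 <= s -> derivable v1 s 1 by move=> /v1_der [].
have dv2 (s : R) : 0 <= s -> derivable v2 s 1 by move=> /v2_der [].
have [_ v2t] := damped_skew_system_eq0 DeltaF (fun=> 1) v1 v2 v10 v20 dv1 dv2
  (fun s s0 => v1_der s (ltW s0)) v2_ode (fun _ _ => ler01) t t0.
by rewrite /v2 /c1 /c2 in v2t; lra.
Qed.
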